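(* Fix $\Delta>0$. In the $\mathrm{EDD}(\lambda)$ model with a global clock, the probability that a run of the protocol $\mathrm{CORE}(\Delta)$ is correct is at least $(1-e^{-\lambda\Delta})^n$.
   Context: Agents $i_0,i_1,\ldots,i_n$ share an accurate global clock and are connected by a complete reliable network; the delay of each message is an independent exponential random variable with parameter $\lambda$. At time $0$ the supervisor $i_0$ receives an external input. Protocol $\mathrm{CORE}(\Delta)$: at time $0$, $i_0$ sends a ''trigger'' message to each of $i_1,\ldots,i_n$; upon receiving the trigger, agent $i_k$ waits until the global time is at least $\Delta$ and then performs its action $\alpha_k$ (acting immediately if the trigger arrives after time $\Delta$). Letting $t_k$ be the time at which $i_k$ performs $\alpha_k$, a run is correct if $t_1\le t_2\le\cdots\le t_n<\infty$. *)

From HB Require Import structures.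
From mathcomp Require Import all_boot all_order all_algebra.
From mathcomp Require Import all_classical all_reals all_analysis.
Set Implicit Arguments. Unset Strict Implicit. Unset Printing Implicit Defensive.
Import Order.TTheory GRing.Theory Num.Theory.
Local Open Scope classical_set_scope.
Local Open Scope ring_scope.

(* Mutual independence of a finite family of real random variables:
   the product rule for every choice of Borel sets (taking B i = setT
   recovers every finite subfamily). *)
Definition mutually_independent d (T : measurableType d) (R : realType)
  (P : probability T R) (n : nat) (X : 'I_n -> T -> R) : Prop :=
  forall B : 'I_n -> set R, (forall i, measurable (B i)) ->
    P (\bigcap_(i in [set: 'I_n]) (X i @^-1` B i)) =
    (\prod_(i < n) P (X i @^-1` B i))%E.

(* Protocol CORE(Delta): agent i_k receives the trigger at time
   [delay] (sent at time 0) and acts at time max(Delta, delay). *)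
Definition core_action_time (R : realType) (Delta delay : R) : R :=
  Num.max Delta delay.

(* A run with action times t_1,...,t_n is correct iff t_1 <= ... <= t_n
   (finiteness is automatic: times are real numbers). *)
Definition run_correct (R : realType) (n : nat) (t : 'I_n -> R) : Prop :=
  forall i j : 'I_n, (i <= j)%N -> t i <= t j.

Definition core_correct_event d (T : measurableType d) (R : realType)
  (n : nat) (Delta : R) (D : 'I_n -> T -> R) : set T :=
  [set w | run_correct (fun k => core_action_time Delta (D k w))].

From HB Require Import structures.
From mathcomp Require Import all_boot all_order all_algebra.
From mathcomp Require Import all_classical all_reals all_analysis.
From mathcomp Require Import measurable_realfun.
Import Order.TTheory GRing.Theory Num.Theory.
Local Open Scope classical_set_scope.
Local Open Scope ring_scope.

(* If every trigger arrives by time Delta, every agent acts exactly at time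
   Delta, so the run is correct.  Each delay is at most Delta with probability
   1 - e^(-lambda Delta), independently of the others, hence this sufficient
   event has probability (1 - e^(-lambda Delta))^n. *)

Lemma core_action_time_early (R : realType) (Delta delay : R) :
  delay <= Delta -> core_action_time Delta delay = Delta.
Proof. by move=> /max_idPl. Qed.

Lemma core_correct_all_early d (T : measurableType d) (R : realType) (n : nat)
    (Delta : R) (D : 'I_n -> T -> R) :
  [set w | forall k, D k w <= Delta] `<=` core_correct_event Delta D.
Proof.
by move=> w early i j _; rewrite /= !core_action_time_early.
Qed.

Lemma measurable_core_correct_event d (T : measurableType d) (R : realType)
    (n : nat) (Delta : R) (D : 'I_n -> T -> R) :
  (forall k, measurable_fun setT (D k)) ->
  measurable (core_correct_event Delta D).
Proof.
move=> mD.
have -> : core_correct_event Delta D =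
    \bigcap_(i in [set: 'I_n]) \bigcap_(j in [set j : 'I_n | (i <= j)%N])
      [set w | core_action_time Delta (D i w) <= core_action_time Delta (D j w)].
  apply/seteqP; split=> w /=; first by move=> ordered i _ j; exact: ordered.
  by move=> ordered i j; exact: ordered.
apply: fin_bigcap_measurable; first exact: finite_finset.
move=> i _; apply: fin_bigcap_measurable; first exact: finite_finset.
move=> j _; rewrite -[X in measurable X]setTI.
by apply: measurable_fun_le => //; exact: measurable_maxr.
Qed.

Lemma iid_prob_bigcap_preimage d (T : measurableType d) (R : realType)
    (P : probability T R) (n : nat) (X : 'I_n -> {RV P >-> R})
    (A : set R) (p : R) :
  mutually_independent P (fun k => (X k : T -> R)) -> measurable A ->
  (forall k, distribution P (X k) A = p%:E) ->
  P (\bigcap_(k in [set: 'I_n]) ((X k : T -> R) @^-1` A)) = (p ^+ n)%:E.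
Proof.
move=> X_indep mA X_law; rewrite X_indep //.
transitivity (\prod_(k < n) p%:E)%E; first by apply: eq_bigr => k _; exact: X_law.
by rewrite prodEFin prodr_const card_ord.
Qed.

Theorem corollary1 (R : realType) (d : measure_display) (T : measurableType d)
  (P : probability T R) (n : nat) (lambda Delta : R)
  (lambda_gt0 : 0 < lambda) (Delta_gt0 : 0 < Delta)
  (D : 'I_n -> {RV P >-> R})
  (D_indep : mutually_independent P (fun k => (D k : T -> R)))
  (D_exp : forall (k : 'I_n) (A : set R), measurable A ->
     distribution P (D k) A = exponential_prob lambda A) :
  (((1 - expR (- (lambda * Delta))) ^+ n)%:E <=
     P (core_correct_event Delta (fun k => (D k : T -> R))))%E.
Proof.
set early := \bigcap_(k in [set: 'I_n]) ((D k : T -> R) @^-1` `[0, Delta]).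
have P_early : P early = ((1 - expR (- (lambda * Delta))) ^+ n)%:E.
  apply: iid_prob_bigcap_preimage D_indep (measurable_itv _) _ => k.
  by rewrite D_exp ?exponential_prob_itv0c // mulNr EFinB.
have m_early : measurable early.
  apply: fin_bigcap_measurable; first exact: finite_finset.
  by move=> k _; rewrite -[X in measurable X]setTI; exact: measurable_funP.
rewrite -P_early; apply: le_measure; rewrite ?inE //.
  by apply: measurable_core_correct_event => k; exact: measurable_funP.
move=> w early_w; apply: core_correct_all_early => k.
by have := early_w k I; rewrite /= in_itv /= => /andP[].
Qed.
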